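(* Let $E$ be a set and $T$ a set of infinitary propositional formulae over $E$, and let $C$ be the set of models of $T$. (a) If every formula of $T$ is a clause $\bigwedge X\Rightarrow\bigvee Y$ with $X\neq\emptyset$, then $(E,C)$ is rooted. (b) If every formula is a clause $\bigwedge X\Rightarrow\bigvee Y$ with $|X|=1$ or $Y=\emptyset$, then $C$ is closed under bounded unions. (c) If every formula is a clause with $|Y|\le1$, then $C$ is closed under nonempty intersections. (d) If every formula has the form $\bigwedge X\Rightarrow\big((\bigvee_{j\in J}\bigwedge Y_j)\wedge\bigwedge_{j,k\in J,j\ne k}\neg(\bigwedge Y_j\wedge\bigwedge Y_k)\big)$ with $X,Y_j\subseteq E$, then $C$ is closed under bounded nonempty intersections. (e) If every formula is a clause with $X$ finite, then $(E,C)$ has finite conflict. (f) If every formula is a clause with $|X|\le 2$, then $(E,C)$ has binary conflict. (g) If every formula is a clause with $|X|=1$, or with $X$ finite and $Y=\emptyset$, then $C$ is closed under finitely consistent unions. (h) If every formula is a clause with $|X|=1$, or with $|X|\le2$ and $Y=\emptyset$, then $C$ is closed under pairwise consistent unions. (i) If every formula has the form $\bigwedge X\Rightarrow\big((\bigvee_{j\in J}\bigwedge Y_j)\wedge\bigwedge_{j,k\in J,j\ne k}\neg(\bigwedge Z_{j,k}\wedge\bigwedge Z_{k,j})\big)$ with $X$ finite, $Y_j\subseteq E$, and each $Z_{j,k}$ a finite subset of $Y_j$, then $C$ is closed under finitely consistent nonempty intersections. (j) If every formula has the form $\big(\bigwedge X\Rightarrow\bigvee_{j\in J}\bigwedge Y_j\big)\wedge\bigwedge_{j,k\in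 J,j\neq k}\neg(e_{j,k}\wedge e_{k,j})$ with $|X|\le2$, $Y_j\subseteq E$ and $e_{j,k}\in Y_j$, then $C$ is closed under pairwise consistent nonempty intersections.
   Context: A model of $T$ is a subset $m\subseteq E$ (the true variables) making every formula of $T$ true; $\bigwedge$, $\bigvee$ may be infinitary. For a configuration structure $(E,C)$ with $C\subseteq\mathcal{P}(E)$: rooted means $\emptyset\in C$; $X$ is consistent if $X\subseteq z$ for some $z\in C$, finitely consistent if all its finite subsets are consistent, pairwise consistent if all its subsets of size $\le 2$ are consistent. Closed under bounded unions: $A\subseteq C$ and $\bigcup A$ consistent imply $\bigcup A\in C$; nonempty intersections: $\emptyset\ne A\subseteq C$ implies $\bigcap A\in C$; bounded nonempty intersections: $\emptyset\neq A\subseteq C$ with $\bigcup A$ consistent implies $\bigcap A\in C$; finitely (pairwise) consistent unions: $A\subseteq C$ with $\bigcup A$ finitely (pairwise) consistent implies $\bigcup A\in C$; finitely (pairwise) consistent nonempty intersections: $\emptyset\neq A\subseteq C$ with $\bigcup A$ finitely (pairwise) consistent implies $\bigcap A\in C$. $(E,C)$ has finite conflict if every $X\subseteq E$ such that every finite $Y\subseteq X$ satisfies $Y\subseteq z\subseteq X$ for some $z\in C$ lies in $C$; binary conflict: same with ''$|Y|\le2$'' in place of ''finite''. *)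

From Stdlib Require Import List.

Set Implicit Arguments.

Definition subset {E : Type} (X Y : E -> Prop) : Prop := forall x, X x -> Y x.
Definition finite_set {E : Type} (X : E -> Prop) : Prop :=
  exists l : list E, forall x, X x -> In x l.
Definition card_le2 {E : Type} (X : E -> Prop) : Prop :=
  exists a b : E, forall x, X x -> x = a \/ x = b.
Definition card_eq1 {E : Type} (X : E -> Prop) : Prop :=
  exists a : E, forall x, X x <-> x = a.
Definition nonempty_set {E : Type} (X : E -> Prop) : Prop := exists x, X x.
Definition empty_set {E : Type} (X : E -> Prop) : Prop := forall x, ~ X x.

Inductive form (E : Type) : Type :=
  | Var : E -> form E
  | Neg : form E -> form E
  | And2 : form E -> form E -> form E
  | Imp : form E -> form E -> form E
  | BigAnd : forall I : Type, (I -> form E) -> form E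
  | BigOr : forall I : Type, (I -> form E) -> form E.

Arguments Var {E}.
Arguments BigAnd {E} I.
Arguments BigOr {E} I.

Fixpoint sat {E : Type} (m : E -> Prop) (f : form E) : Prop :=
  match f with
  | Var e => m e
  | Neg g => ~ sat m g
  | And2 g h => sat m g /\ sat m h
  | Imp g h => sat m g -> sat m h
  | @BigAnd _ Ix F => forall i : Ix, sat m (F i)
  | @BigOr _ Ix F => exists i : Ix, sat m (F i)
  end.

Definition andset {E : Type} (X : E -> Prop) : form E :=
  BigAnd {x : E | X x} (fun x => Var (proj1_sig x)).
Definition orset {E : Type} (Y : E -> Prop) : form E :=
  BigOr {y : E | Y y} (fun y => Var (proj1_sig y)).

Definition clause {E : Type} (X Y : E -> Prop) : form E :=
  Imp (andset X) (orset Y).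

Definition model {E : Type} (T : form E -> Prop) (m : E -> Prop) : Prop :=
  forall f, T f -> sat m f.

Definition offdiag (J : Type) : Type := {p : J * J | fst p <> snd p}.

Definition form_d {E : Type} (X : E -> Prop) (J : Type) (Y : J -> E -> Prop)
  : form E :=
  Imp (andset X)
      (And2 (BigOr J (fun j => andset (Y j)))
            (BigAnd (offdiag J) (fun p =>
               Neg (And2 (andset (Y (fst (proj1_sig p))))
                         (andset (Y (snd (proj1_sig p)))))))). 

Definition form_i {E : Type} (X : E -> Prop) (J : Type) (Y : J -> E -> Prop)
  (Z : J -> J -> E -> Prop) : form E :=
  Imp (andset X)
      (And2 (BigOr J (fun j => andset (Y j)))
            (BigAnd (offdiag J) (fun p =>
               Neg (And2 (andset (Z (fst (proj1_sig p)) (snd (proj1_sig p))))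
                         (andset (Z (snd (proj1_sig p)) (fst (proj1_sig p)))))))).

Definition form_j {E : Type} (X : E -> Prop) (J : Type) (Y : J -> E -> Prop)
  (e : J -> J -> E) : form E :=
  And2 (Imp (andset X) (BigOr J (fun j => andset (Y j))))
       (BigAnd (offdiag J) (fun p =>
          Neg (And2 (Var (e (fst (proj1_sig p)) (snd (proj1_sig p))))
                    (Var (e (snd (proj1_sig p)) (fst (proj1_sig p))))))).

Section Config.
Context {E : Type} (C : (E -> Prop) -> Prop).

Definition bigunion (A : (E -> Prop) -> Prop) : E -> Prop :=
  fun x => exists z, A z /\ z x.
Definition bigintersection (A : (E -> Prop) -> Prop) : E -> Prop :=
  fun x => forall z, A z -> z x.
Definition nonempty_family (A : (E -> Prop) -> Prop) : Prop := exists z, A z.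

Definition rooted : Prop := C (fun _ => False).
Definition consistent (X : E -> Prop) : Prop := exists z, C z /\ subset X z.
Definition fin_consistent (X : E -> Prop) : Prop :=
  forall Y, subset Y X -> finite_set Y -> consistent Y.
Definition pair_consistent (X : E -> Prop) : Prop :=
  forall Y, subset Y X -> card_le2 Y -> consistent Y.

Definition closed_bounded_unions : Prop :=
  forall A, subset A C -> consistent (bigunion A) -> C (bigunion A).
Definition closed_nonempty_intersections : Prop :=
  forall A, nonempty_family A -> subset A C -> C (bigintersection A).
Definition closed_bounded_nonempty_intersections : Prop :=
  forall A, nonempty_family A -> subset A C -> consistent (bigunion A) ->
    C (bigintersection A).
Definition closed_fin_consistent_unions : Prop :=
  forall A, subset A C -> fin_consistent (bigunion A) -> C (bigunion A).
Definition closed_pair_consistent_unions : Prop :=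
  forall A, subset A C -> pair_consistent (bigunion A) -> C (bigunion A).
Definition closed_fin_consistent_nonempty_intersections : Prop :=
  forall A, nonempty_family A -> subset A C -> fin_consistent (bigunion A) ->
    C (bigintersection A).
Definition closed_pair_consistent_nonempty_intersections : Prop :=
  forall A, nonempty_family A -> subset A C -> pair_consistent (bigunion A) ->
    C (bigintersection A).

Definition finite_conflict : Prop :=
  forall X : E -> Prop,
    (forall Y, subset Y X -> finite_set Y ->
       exists z, C z /\ subset Y z /\ subset z X) -> C X.
Definition binary_conflict : Prop :=
  forall X : E -> Prop,
    (forall Y, subset Y X -> card_le2 Y ->
       exists z, C z /\ subset Y z /\ subset z X) -> C X.
End Config.

Definition card_le1 {E : Type} (X : E -> Prop) : Prop :=
  forall x y, X x -> X y -> x = y.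

(* Each closure property is checked one formula of T at a time, using only the
   syntactic shape of that formula.  Clauses with a singleton premise survive
   arbitrary unions, clauses with at most one conclusion survive intersections,
   negative clauses fail only on inconsistent sets, and a clause whose premise is
   small is decided by a model lying between that premise and the candidate set.
   For the formulae of (d), (i) and (j) the members of a family that is suitably
   consistent all select the same disjunct [/\ Y_j], because two distinct
   selections would violate the exclusion part of the formula in a model bounding
   them; that common disjunct then holds in the intersection. *)

From Stdlib Require Import List Classical.

Section Formulas.
Context {E : Type}.

Lemma sat_andset (m X : E -> Prop) : sat m (andset X) <-> subset X m.
Proof.
  unfold andset, subset; simpl; split.
  - intros H x Hx. exact (H (exist _ x Hx)).
  - intros H [x Hx]; simpl; auto.
Qed.

Lemma sat_orset (m Y : E -> Prop) : sat m (orset Y) <-> exists y, Y y /\ m y.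
Proof.
  unfold orset; simpl; split.
  - intros [[y Hy] H]; simpl in *; eauto.
  - intros [y [Hy H]]. exists (exist _ y Hy); auto.
Qed.

Lemma sat_clause (m X Y : E -> Prop) :
  sat m (clause X Y) <-> (subset X m -> exists y, Y y /\ m y).
Proof. unfold clause; cbn [sat]; rewrite sat_andset, sat_orset; tauto. Qed.

Lemma sat_form_i (m X : E -> Prop) (J : Type) (Y : J -> E -> Prop) Z :
  sat m (form_i X Y Z) <->
  (subset X m -> (exists j, subset (Y j) m) /\
     forall j k, j <> k -> ~ (subset (Z j k) m /\ subset (Z k j) m)).
Proof.
  unfold form_i; cbn [sat]; rewrite sat_andset.
  split; intros H HX; destruct (H HX) as [[j Hj] Hexcl]; split.
  - exists j. now apply sat_andset.
  - intros j' k Hjk [H1 H2]. apply (Hexcl (exist _ (j', k) Hjk)); simpl.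
    split; now apply sat_andset.
  - exists j. now apply sat_andset.
  - intros [[j' k] Hjk] [H1 H2]; simpl in *. apply (Hexcl j' k Hjk).
    split; now apply sat_andset.
Qed.

(* [form_d X Y] is convertible to [form_i X Y (fun j _ => Y j)]. *)
Lemma sat_form_d (m X : E -> Prop) (J : Type) (Y : J -> E -> Prop) :
  sat m (form_d X Y) <->
  (subset X m -> (exists j, subset (Y j) m) /\
     forall j k, j <> k -> ~ (subset (Y j) m /\ subset (Y k) m)).
Proof. exact (sat_form_i m X J Y (fun j _ => Y j)). Qed.

Lemma sat_form_j (m X : E -> Prop) (J : Type) (Y : J -> E -> Prop) e :
  sat m (form_j X Y e) <->
  ((subset X m -> exists j, subset (Y j) m) /\
     forall j k, j <> k -> ~ (m (e j k) /\ m (e k j))).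
Proof.
  unfold form_j; cbn [sat]; rewrite sat_andset.
  split; intros [Himp Hexcl]; split.
  - intros HX. destruct (Himp HX) as [j Hj]. exists j. now apply sat_andset.
  - intros j k Hjk. exact (Hexcl (exist _ (j, k) Hjk)).
  - intros HX. destruct (Himp HX) as [j Hj]. exists j. now apply sat_andset.
  - intros [[j k] Hjk]; simpl. exact (Hexcl j k Hjk).
Qed.

Lemma subset_bigunion {A : (E -> Prop) -> Prop} {z : E -> Prop} :
  A z -> subset z (bigunion A).
Proof. intros Hz x Hx. exists z. auto. Qed.

Lemma finite_set_union (X Y : E -> Prop) :
  finite_set X -> finite_set Y -> finite_set (fun x => X x \/ Y x).
Proof.
  intros [l1 H1] [l2 H2]. exists (l1 ++ l2).
  intros x [Hx|Hx]; apply in_or_app; auto.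
Qed.

Lemma clause_sat_empty (X Y : E -> Prop) :
  nonempty_set X -> sat (fun _ => False) (clause X Y).
Proof. intros [x Hx]. apply sat_clause. intros HX. destruct (HX x Hx). Qed.

Lemma clause_singleton_sat_bigunion (A : (E -> Prop) -> Prop) (X Y : E -> Prop) :
  card_eq1 X -> (forall z, A z -> sat z (clause X Y)) ->
  sat (bigunion A) (clause X Y).
Proof.
  intros [a Ha] Hsat. apply sat_clause. intros HX.
  destruct (HX a (proj2 (Ha a) eq_refl)) as [z [Hz Hza]].
  assert (HXz : subset X z) by (intros x Hx; apply Ha in Hx; subst; exact Hza).
  destruct (proj1 (sat_clause _ _ _) (Hsat z Hz) HXz) as [y [Hy Hzy]].
  exists y. split; [exact Hy | exists z; auto].
Qed.

Lemma clause_sat_bigintersection (A : (E -> Prop) -> Prop) (X Y : E -> Prop) :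
  card_le1 Y -> nonempty_family A -> (forall z, A z -> sat z (clause X Y)) ->
  sat (bigintersection A) (clause X Y).
Proof.
  intros HY [z0 Hz0] Hsat. apply sat_clause. intros HX.
  assert (Hconcl : forall z, A z -> exists y, Y y /\ z y).
  { intros z Hz. apply (proj1 (sat_clause _ _ _) (Hsat z Hz)).
    intros x Hx. exact (HX x Hx z Hz). }
  destruct (Hconcl z0 Hz0) as [y0 [Hy0 _]].
  exists y0. split; [exact Hy0|]. intros z Hz.
  destruct (Hconcl z Hz) as [y [Hy Hzy]].
  rewrite (HY y0 y Hy0 Hy). exact Hzy.
Qed.

Lemma clause_sat_of_local (m X Y : E -> Prop) :
  (subset X m -> exists z, sat z (clause X Y) /\ subset X z /\ subset z m) ->
  sat m (clause X Y).
Proof.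
  intros Hloc. apply sat_clause. intros HX.
  destruct (Hloc HX) as (z & Hz & HXz & Hzm).
  destruct (proj1 (sat_clause _ _ _) Hz HXz) as [y [Hy Hzy]].
  exists y. auto.
Qed.

Lemma common_disjunct (A : (E -> Prop) -> Prop) (J : Type) (Y : J -> E -> Prop) :
  nonempty_family A ->
  (forall z, A z -> exists j, subset (Y j) z) ->
  (forall z z' j k, A z -> A z' -> j <> k ->
     subset (Y j) z -> subset (Y k) z' -> False) ->
  exists j, subset (Y j) (bigintersection A).
Proof.
  intros [z0 Hz0] Hsel Hcoh.
  destruct (Hsel z0 Hz0) as [j0 Hj0].
  exists j0. intros x Hx z Hz.
  destruct (Hsel z Hz) as [j Hj].
  destruct (classic (j = j0)) as [<-|Hne].
  - exact (Hj x Hx).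
  - destruct (Hcoh z z0 j j0 Hz Hz0 Hne Hj Hj0).
Qed.

Lemma form_i_sat_bigintersection (A : (E -> Prop) -> Prop) (X : E -> Prop)
    (J : Type) (Y : J -> E -> Prop) Z :
  nonempty_family A -> (forall z, A z -> sat z (form_i X Y Z)) ->
  (subset X (bigintersection A) -> forall z z' j k, A z -> A z' -> j <> k ->
     subset (Y j) z -> subset (Y k) z' -> False) ->
  sat (bigintersection A) (form_i X Y Z).
Proof.
  intros [z0 Hz0] Hsat Hcoh. apply sat_form_i. intros HX.
  assert (Hmember : forall z, A z -> (exists j, subset (Y j) z) /\
            forall j k, j <> k -> ~ (subset (Z j k) z /\ subset (Z k j) z)).
  { intros z Hz. apply (proj1 (sat_form_i _ _ _ _ _) (Hsat z Hz)).
    intros x Hx. exact (HX x Hx z Hz). }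
  split.
  - apply common_disjunct; [exists z0; exact Hz0 | | exact (Hcoh HX)].
    intros z Hz. exact (proj1 (Hmember z Hz)).
  - intros j k Hjk [H1 H2]. apply (proj2 (Hmember z0 Hz0) j k Hjk).
    split; intros x Hx; [exact (H1 x Hx z0 Hz0) | exact (H2 x Hx z0 Hz0)].
Qed.

End Formulas.

Section Models.
Variables (E : Type) (T : form E -> Prop).

Lemma consistent_subset (X Y : E -> Prop) :
  subset X Y -> consistent (model T) Y -> consistent (model T) X.
Proof. intros HXY [w [Hw HYw]]. exists w. split; [exact Hw | intros x Hx; auto]. Qed.

Lemma negative_clause_sat (m X Y : E -> Prop) :
  empty_set Y -> T (clause X Y) ->
  (subset X m -> consistent (model T) X) -> sat m (clause X Y).
Proof.
  intros HY HT Hcons. apply sat_clause. intros HX.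
  destruct (Hcons HX) as [w [Hw HXw]].
  destruct (proj1 (sat_clause _ _ _) (Hw _ HT) HXw) as [y [Hy _]].
  destruct (HY y Hy).
Qed.

Lemma models_rooted :
  (forall f, T f -> exists X Y, f = clause X Y /\ nonempty_set X) ->
  rooted (model T).
Proof.
  intros H f Hf. destruct (H f Hf) as (X & Y & -> & HX).
  now apply clause_sat_empty.
Qed.

Lemma models_closed_bounded_unions :
  (forall f, T f -> exists X Y, f = clause X Y /\ (card_eq1 X \/ empty_set Y)) ->
  closed_bounded_unions (model T).
Proof.
  intros H A HA Hbound f Hf.
  destruct (H f Hf) as (X & Y & -> & [H1|HY]).
  - apply clause_singleton_sat_bigunion; [exact H1|].
    intros z Hz. exact (HA z Hz _ Hf).
  - apply negative_clause_sat; auto.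
    intros HX. exact (consistent_subset _ _ HX Hbound).
Qed.

Lemma models_closed_nonempty_intersections :
  (forall f, T f -> exists X Y, f = clause X Y /\ card_le1 Y) ->
  closed_nonempty_intersections (model T).
Proof.
  intros H A HAne HA f Hf. destruct (H f Hf) as (X & Y & -> & HY).
  apply clause_sat_bigintersection; auto.
  intros z Hz. exact (HA z Hz _ Hf).
Qed.

Lemma models_closed_bounded_nonempty_intersections :
  (forall f, T f -> exists (X : E -> Prop) (J : Type) (Y : J -> E -> Prop),
     f = form_d X Y) ->
  closed_bounded_nonempty_intersections (model T).
Proof.
  intros H A HAne HA [w [Hw Hbound]] f Hf. destruct (H f Hf) as (X & J & Y & ->).
  apply (form_i_sat_bigintersection A X J Y (fun j _ => Y j) HAne).
  - intros z Hz. exact (HA z Hz _ Hf).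
  - intros HX z z' j k Hz Hz' Hjk Hj Hk.
    destruct HAne as [z0 Hz0].
    assert (HXw : subset X w)
      by (intros x Hx; apply Hbound, (subset_bigunion Hz0), (HX x Hx z0 Hz0)).
    apply (proj2 (proj1 (sat_form_d _ _ _ _) (Hw _ Hf) HXw) j k Hjk).
    split; intros x Hx; apply Hbound.
    + exact (subset_bigunion Hz x (Hj x Hx)).
    + exact (subset_bigunion Hz' x (Hk x Hx)).
Qed.

Lemma models_finite_conflict :
  (forall f, T f -> exists X Y, f = clause X Y /\ finite_set X) ->
  finite_conflict (model T).
Proof.
  intros H m Hloc f Hf. destruct (H f Hf) as (X & Y & -> & Hfin).
  apply clause_sat_of_local. intros HX.
  destruct (Hloc X HX Hfin) as (z & Hz & HXz & Hzm).
  exists z. auto.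
Qed.

Lemma models_binary_conflict :
  (forall f, T f -> exists X Y, f = clause X Y /\ card_le2 X) ->
  binary_conflict (model T).
Proof.
  intros H m Hloc f Hf. destruct (H f Hf) as (X & Y & -> & H2).
  apply clause_sat_of_local. intros HX.
  destruct (Hloc X HX H2) as (z & Hz & HXz & Hzm).
  exists z. auto.
Qed.

Lemma models_closed_fin_consistent_unions :
  (forall f, T f -> exists X Y, f = clause X Y /\
     (card_eq1 X \/ (finite_set X /\ empty_set Y))) ->
  closed_fin_consistent_unions (model T).
Proof.
  intros H A HA Hcons f Hf.
  destruct (H f Hf) as (X & Y & -> & [H1|[Hfin HY]]).
  - apply clause_singleton_sat_bigunion; [exact H1|].
    intros z Hz. exact (HA z Hz _ Hf).
  - apply negative_clause_sat; auto.
Qed.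

Lemma models_closed_pair_consistent_unions :
  (forall f, T f -> exists X Y, f = clause X Y /\
     (card_eq1 X \/ (card_le2 X /\ empty_set Y))) ->
  closed_pair_consistent_unions (model T).
Proof.
  intros H A HA Hcons f Hf.
  destruct (H f Hf) as (X & Y & -> & [H1|[H2 HY]]).
  - apply clause_singleton_sat_bigunion; [exact H1|].
    intros z Hz. exact (HA z Hz _ Hf).
  - apply negative_clause_sat; auto.
Qed.

Lemma models_closed_fin_consistent_nonempty_intersections :
  (forall f, T f -> exists (X : E -> Prop) (J : Type) (Y : J -> E -> Prop)
     (Z : J -> J -> E -> Prop),
     f = form_i X Y Z /\ finite_set X /\
     (forall j k, j <> k -> subset (Z j k) (Y j) /\ finite_set (Z j k))) ->
  closed_fin_consistent_nonempty_intersections (model T).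
Proof.
  intros H A HAne HA Hcons f Hf.
  destruct (H f Hf) as (X & J & Y & Z & -> & HXfin & HZ).
  apply (form_i_sat_bigintersection _ _ _ _ _ HAne).
  - intros z Hz. exact (HA z Hz _ Hf).
  - intros HX z z' j k Hz Hz' Hjk Hj Hk.
    destruct HAne as [z0 Hz0].
    destruct (HZ j k Hjk) as [HZjk Hfin_jk].
    destruct (HZ k j (fun e => Hjk (eq_sym e))) as [HZkj Hfin_kj].
    destruct (Hcons (fun x => X x \/ Z j k x \/ Z k j x)) as [w [Hw HSw]].
    + intros x [Hx|[Hx|Hx]].
      * exact (subset_bigunion Hz0 x (HX x Hx z0 Hz0)).
      * exact (subset_bigunion Hz x (Hj x (HZjk x Hx))).
      * exact (subset_bigunion Hz' x (Hk x (HZkj x Hx))).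
    + repeat apply finite_set_union; assumption.
    + apply (proj2 (proj1 (sat_form_i _ _ _ _ _) (Hw _ Hf)
                      (fun x Hx => HSw x (or_introl Hx))) j k Hjk).
      split; intros x Hx; apply HSw; auto.
Qed.

Lemma models_closed_pair_consistent_nonempty_intersections :
  (forall f, T f -> exists (X : E -> Prop) (J : Type) (Y : J -> E -> Prop)
     (e : J -> J -> E),
     f = form_j X Y e /\ card_le2 X /\ (forall j k, j <> k -> Y j (e j k))) ->
  closed_pair_consistent_nonempty_intersections (model T).
Proof.
  intros H A HAne HA Hcons f Hf.
  destruct (H f Hf) as (X & J & Y & e & -> & _ & HY).
  assert (Hmember : forall z, A z -> (subset X z -> exists j, subset (Y j) z) /\
            forall j k, j <> k -> ~ (z (e j k) /\ z (e k j)))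
    by (intros z Hz; exact (proj1 (sat_form_j _ _ _ _ _) (HA z Hz _ Hf))).
  apply sat_form_j. split.
  - intros HX. apply common_disjunct; [exact HAne| |].
    + intros z Hz. apply (proj1 (Hmember z Hz)). intros x Hx. exact (HX x Hx z Hz).
    + intros z z' j k Hz Hz' Hjk Hj Hk.
      destruct (Hcons (fun x => x = e j k \/ x = e k j)) as [w [Hw Hpair]].
      * intros x [-> | ->].
        -- exact (subset_bigunion Hz _ (Hj _ (HY j k Hjk))).
        -- exact (subset_bigunion Hz' _ (Hk _ (HY k j (fun Heq => Hjk (eq_sym Heq))))).
      * exists (e j k), (e k j). auto.
      * apply (proj2 (proj1 (sat_form_j _ _ _ _ _) (Hw _ Hf)) j k Hjk).
        split; apply Hpair; auto.
  - destruct HAne as [z0 Hz0]. intros j k Hjk [H1 H2].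
    exact (proj2 (Hmember z0 Hz0) j k Hjk (conj (H1 z0 Hz0) (H2 z0 Hz0))).
Qed.

End Models.

Theorem mainTheorem13 (E : Type) (T : form E -> Prop) :
  (* (a) *)
  ((forall f, T f -> exists X Y, f = clause X Y /\ nonempty_set X) ->
     rooted (model T)) /\
  (* (b) *)
  ((forall f, T f -> exists X Y, f = clause X Y /\ (card_eq1 X \/ empty_set Y)) ->
     closed_bounded_unions (model T)) /\
  (* (c) *)
  ((forall f, T f -> exists X Y, f = clause X Y /\ card_le1 Y) ->
     closed_nonempty_intersections (model T)) /\
  (* (d) *)
  ((forall f, T f -> exists (X : E -> Prop) (J : Type) (Y : J -> E -> Prop),
       f = form_d X Y) ->
     closed_bounded_nonempty_intersections (model T)) /\
  (* (e) *)
  ((forall f, T f -> exists X Y, f = clause X Y /\ finite_set X) ->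
     finite_conflict (model T)) /\
  (* (f) *)
  ((forall f, T f -> exists X Y, f = clause X Y /\ card_le2 X) ->
     binary_conflict (model T)) /\
  (* (g) *)
  ((forall f, T f -> exists X Y, f = clause X Y /\
       (card_eq1 X \/ (finite_set X /\ empty_set Y))) ->
     closed_fin_consistent_unions (model T)) /\
  (* (h) *)
  ((forall f, T f -> exists X Y, f = clause X Y /\
       (card_eq1 X \/ (card_le2 X /\ empty_set Y))) ->
     closed_pair_consistent_unions (model T)) /\
  (* (i) *)
  ((forall f, T f -> exists (X : E -> Prop) (J : Type) (Y : J -> E -> Prop)
       (Z : J -> J -> E -> Prop),
       f = form_i X Y Z /\ finite_set X /\
       (forall j k, j <> k -> subset (Z j k) (Y j) /\ finite_set (Z j k))) ->
     closed_fin_consistent_nonempty_intersections (model T)) /\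
  (* (j) *)
  ((forall f, T f -> exists (X : E -> Prop) (J : Type) (Y : J -> E -> Prop)
       (e : J -> J -> E),
       f = form_j X Y e /\ card_le2 X /\ (forall j k, j <> k -> Y j (e j k))) ->
     closed_pair_consistent_nonempty_intersections (model T)).
Proof.
  exact (conj (@models_rooted E T)
        (conj (@models_closed_bounded_unions E T)
        (conj (@models_closed_nonempty_intersections E T)
        (conj (@models_closed_bounded_nonempty_intersections E T)
        (conj (@models_finite_conflict E T)
        (conj (@models_binary_conflict E T)
        (conj (@models_closed_fin_consistent_unions E T)
        (conj (@models_closed_pair_consistent_unions E T)
        (conj (@models_closed_fin_consistent_nonempty_intersections E T)
              (@models_closed_pair_consistent_nonempty_intersections E T)))))))))).
Qed.
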